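(* For every graph $G$ and every edge $e\in E(G)$, $$\mathrm{adim}(G)-1\le\mathrm{adim}(G-e)\le\mathrm{adim}(G)+1.$$
   Context: In a graph $H$, let $d_{H,1}(a,b)$ be $0$ if $a=b$, $1$ if $ab\in E(H)$, and $2$ otherwise. A set $A\subseteq V(H)$ is an adjacency resolving set of $H$ if for all distinct $a,b\in V(H)$ there is $z\in A$ with $d_{H,1}(a,z)\ne d_{H,1}(b,z)$. $\mathrm{adim}(H)$ is the minimum size of an adjacency resolving set of $H$. $G-e$ denotes $G$ with the edge $e$ deleted. *)

From mathcomp Require Import all_boot.
Set Implicit Arguments. Unset Strict Implicit. Unset Printing Implicit Defensive.

Definition simple_graph (T : finType) (g : rel T) : Prop :=
  symmetric g /\ irreflexive g.

Definition dist1 (T : finType) (g : rel T) (a b : T) : nat :=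
  if a == b then 0 else if g a b then 1 else 2.

Definition adj_resolving (T : finType) (g : rel T) (A : {set T}) : bool :=
  [forall a : T, forall b : T,
     (a != b) ==> [exists z in A, dist1 g a z != dist1 g b z]].

(* adim(g): minimum size of an adjacency resolving set
   (the full vertex set is always resolving, so #|T| is a valid default). *)
Definition adim (T : finType) (g : rel T) : nat :=
  \big[minn/#|T|]_(A : {set T} | adj_resolving g A) #|A|.

Definition del_edge (T : finType) (g : rel T) (u v : T) : rel T :=
  fun x y => g x y && ~~ (((x == u) && (y == v)) || ((x == v) && (y == u))).

From mathcomp Require Import all_boot zify.
Set Implicit Arguments. Unset Strict Implicit.

(* Deleting the edge uv only changes the value d_1(x,y) for the
   pairs with x and y both in S = {u,v}.  We prove, for two arbitrary relations
   g1 g2 whose d_1 agree on every pair not contained in a set S, that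
   adim g2 <= adim g1 + (|S| - 1).  Take a minimum resolving set A of g1.  If A
   avoids S, every resolving vertex z of A still sees d_1(a,z), d_1(b,z)
   unchanged, so A resolves g2.  If A meets S, then A ∪ S resolves g2: a pair
   containing a vertex of S is separated by that vertex itself (d_1(a,a) = 0),
   and any other pair is separated by its old witness; moreover
   |A ∪ S| <= |A| + |S| - 1.  For S = {u,v} the relation "agree off S" holds
   between g and g - uv in both directions, which gives both inequalities. *)

Lemma dist1_self_separates (T : finType) (g : rel T) (a b : T) :
  a != b -> dist1 g a a != dist1 g b a.
Proof. by rewrite /dist1 eqxx eq_sym => /negbTE ->; case: (g b a). Qed.

Lemma adj_resolving_setT (T : finType) (g : rel T) : adj_resolving g setT.
Proof.
apply/forallP=> a; apply/forallP=> b; apply/implyP=> ab.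
by apply/existsP; exists a; rewrite in_setT dist1_self_separates.
Qed.

Lemma adim_le (T : finType) (g : rel T) (B : {set T}) :
  adj_resolving g B -> adim g <= #|B|.
Proof.
move=> resB; rewrite /adim.
have : B \in index_enum {set T} by rewrite mem_index_enum.
elim: (index_enum _) => [//|A r IH]; rewrite inE big_cons => /orP[/eqP <-|Br].
  by rewrite resB geq_minl.
by case: ifP => _; rewrite ?geq_min IH ?orbT.
Qed.

Lemma adim_attained (T : finType) (g : rel T) :
  exists2 A, adj_resolving g A & #|A| = adim g.
Proof.
apply: (big_ind (fun n => exists2 A, adj_resolving g A & #|A| = n)).
- by exists setT; [exact: adj_resolving_setT | rewrite cardsT].
-
  move=> _ _ [A resA <-] [B resB <-].
  by case: (leqP #|A| #|B|) => AB; [exists A | exists B];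
     rewrite // /minn ?ltnNge ?AB // ltnW.
- by move=> A resA; exists A.
Qed.

Definition agree_off (T : finType) (g1 g2 : rel T) (S : {set T}) : Prop :=
  forall x y, (x \notin S) || (y \notin S) -> dist1 g2 x y = dist1 g1 x y.

Lemma agree_off_sym (T : finType) (g1 g2 : rel T) (S : {set T}) :
  agree_off g1 g2 S -> agree_off g2 g1 S.
Proof. by move=> agr x y xyS; rewrite agr. Qed.

Lemma del_edge_agree_off (T : finType) (g : rel T) (u v : T) :
  agree_off g (del_edge g u v) [set u; v].
Proof.
move=> x y; rewrite !inE !negb_or /dist1 /del_edge.
by case/orP=> /andP[/negbTE-> /negbTE->]; rewrite /= ?andbF andbT.
Qed.

Section Transfer.
Variables (T : finType) (g1 g2 : rel T) (S : {set T}).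
Hypothesis agr : agree_off g1 g2 S.

Lemma resolving_transfer_avoid (A : {set T}) :
  adj_resolving g1 A -> [disjoint A & S] -> adj_resolving g2 A.
Proof.
move=> resA disAS; apply/forallP=> a; apply/forallP=> b; apply/implyP=> ab.
have /existsP[z /andP[zA sep]] := implyP (forallP (forallP resA a) b) ab.
have zS : z \notin S by rewrite (disjointFr disAS zA).
by apply/existsP; exists z; rewrite zA !agr ?zS ?orbT.
Qed.

Lemma resolving_transfer_union (A : {set T}) :
  adj_resolving g1 A -> adj_resolving g2 (A :|: S).
Proof.
move=> resA; apply/forallP=> a; apply/forallP=> b; apply/implyP=> ab.
case: (boolP (a \in S)) => aS.
  by apply/existsP; exists a; rewrite inE aS orbT dist1_self_separates.
case: (boolP (b \in S)) => bS.
  apply/existsP; exists b; rewrite inE bS orbT /= eq_sym.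
  by rewrite dist1_self_separates // eq_sym.
have /existsP[z /andP[zA sep]] := implyP (forallP (forallP resA a) b) ab.
by apply/existsP; exists z; rewrite inE zA !agr ?aS ?bS.
Qed.

Lemma adim_agree_off : adim g2 <= adim g1 + (#|S| - 1).
Proof.
have [A resA <-] := adim_attained g1.
have [disAS | meetAS] := boolP [disjoint A & S].
  exact: leq_trans (adim_le (resolving_transfer_avoid resA disAS)) (leq_addr _ _).
apply: leq_trans (adim_le (resolving_transfer_union resA)) _.
have AS_gt0 : 0 < #|A :&: S| by rewrite card_gt0 setI_eq0.
rewrite cardsU; lia.
Qed.

End Transfer.

Theorem theorem6p6 (T : finType) (g : rel T) (u v : T) :
  simple_graph g -> g u v ->
  adim g - 1 <= adim (del_edge g u v) /\ adim (del_edge g u v) <= adim g + 1.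
Proof.
move=> _ _.
have agr := @del_edge_agree_off T g u v.
have card_uv : #|[set u; v]| - 1 <= 1 by rewrite cards2; case: (u != v).
split.
- rewrite leq_subLR addnC.
  exact: leq_trans (adim_agree_off (agree_off_sym agr)) (leq_add _ card_uv).
- exact: leq_trans (adim_agree_off agr) (leq_add _ card_uv).
Qed.
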